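(* The algorithm Balance is not competitive for the infinite server problem on the real line.
   Context: Infinite server problem on the real line: an unbounded number of servers initially reside at a source point; a finite sequence of requests is revealed one by one; each must be served immediately, without knowledge of future requests, by moving a server to it; the cost is the total distance traveled. Balance serves a request $r$ by moving to $r$ a server $x$ minimizing $D_x+d(x,r)$, where $D_x$ is the cumulative distance traveled by $x$ so far and $d(x,r)$ is its distance to $r$ (servers still at the source have $D_x=0$). An online algorithm is competitive if there are $\rho,c$ with $ALG(\sigma)\le\rho\,OPT(\sigma)+c$ for all request sequences $\sigma$. *)

From Stdlib Require Import Reals List.
Import ListNotations.
Open Scope R_scope.

(* Servers are indexed by nat (unboundedly many); all start at the source s
   with cumulative travelled distance 0.
   A history is a list of requests, MOST RECENT FIRST.
   A (deterministic, online) strategy [sel] maps the history including the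
   current request to the index of the server that moves to the current
   request.  Since [sel] sees only the past and current requests, it is
   online; for a fixed request sequence it can realise any offline schedule. *)

Definition upd (f : nat -> R) (i : nat) (v : R) : nat -> R :=
  fun j => if Nat.eqb j i then v else f j.

Fixpoint run (s : R) (sel : list R -> nat) (h : list R)
  : (nat -> R) * (nat -> R) * R :=
  match h with
  | [] => (fun _ => s, fun _ => 0, 0)
  | r :: h' =>
      let st := run s sel h' in
      let p := fst (fst st) in
      let D := snd (fst st) in
      let c := snd st in
      let i := sel h in
      let d := Rabs (p i - r) in
      (upd p i r, upd D i (D i + d), c + d)
  end.

Definition positions s sel h := fst (fst (run s sel h)).
Definition distances s sel h := snd (fst (run s sel h)).

Definition cost (s : R) (sel : list R -> nat) (sigma : list R) : R :=
  snd (run s sel (rev sigma)).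

Definition is_balance (s : R) (sel : list R -> nat) : Prop :=
  forall (r : R) (h : list R),
    let p := positions s sel h in
    let D := distances s sel h in
    let i := sel (r :: h) in
    forall j : nat, D i + Rabs (p i - r) <= D j + Rabs (p j - r).

Definition is_opt (s : R) (sigma : list R) (v : R) : Prop :=
  (exists sel, cost s sel sigma = v) /\ (forall sel, v <= cost s sel sigma).

Definition competitive (s : R) (alg : list R -> nat) : Prop :=
  exists rho c : R, forall (sigma : list R) (v : R),
    is_opt s sigma v -> cost s alg sigma <= rho * v + c.

(* Feed the requests s+N, s+N-1, ..., s+1 in this order.  Every server that
   has moved sits to the right of the current request, and its cumulative
   distance already exceeds the distance from the source, so Balance always
   brings a fresh server from the source and pays N + (N-1) + ... + 1.  A
   single server walking from s+N down to s+1 pays 2N - 1, which is optimal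
   because the first request costs N and each later one at least 1.  A
   quadratic cost cannot be bounded by a linear function of the optimum. *)

From Stdlib Require Import Reals List Lra Lia Psatz.
Import ListNotations.
Open Scope R_scope.

Ltac lra_abs := unfold Rabs in *; repeat match goal with
  | |- context [Rcase_abs ?x] => destruct (Rcase_abs x)
  | H : context [Rcase_abs ?x] |- _ => destruct (Rcase_abs x)
  end; lra.

Lemma positions_cons s sel r h :
  positions s sel (r :: h) = upd (positions s sel h) (sel (r :: h)) r.
Proof. reflexivity. Qed.

Lemma distances_cons s sel r h :
  distances s sel (r :: h) = upd (distances s sel h) (sel (r :: h))
    (distances s sel h (sel (r :: h)) + Rabs (positions s sel h (sel (r :: h)) - r)).
Proof. reflexivity. Qed.

Lemma run_cost_cons s sel r h :
  snd (run s sel (r :: h)) =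
  snd (run s sel h) + Rabs (positions s sel h (sel (r :: h)) - r).
Proof. reflexivity. Qed.

Lemma cost_rev s sel h : cost s sel (rev h) = snd (run s sel h).
Proof. unfold cost; now rewrite rev_involutive. Qed.

Lemma distances_ge_displacement s sel h j :
  distances s sel h j >= Rabs (positions s sel h j - s).
Proof.
  revert j; induction h as [|r h IH]; intros j.
  - unfold distances, positions; simpl; lra_abs.
  - rewrite distances_cons, positions_cons; unfold upd.
    destruct (Nat.eqb j _).
    + pose proof (IH (sel (r :: h))); lra_abs.
    + apply IH.
Qed.

Fixpoint max_selected (sel : list R -> nat) (h : list R) : nat :=
  match h with
  | [] => O
  | r :: h' => Nat.max (sel (r :: h')) (max_selected sel h')
  end.

Lemma unselected_server_unmoved s sel h j : (max_selected sel h < j)%nat ->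
  positions s sel h j = s /\ distances s sel h j = 0.
Proof.
  induction h as [|r h IH]; intros Hj; [split; reflexivity|].
  rewrite distances_cons, positions_cons; unfold upd; simpl in Hj.
  replace (Nat.eqb j (sel (r :: h))) with false by (symmetry; apply Nat.eqb_neq; lia).
  apply IH; lia.
Qed.

Lemma exists_unmoved_server s sel h :
  exists j, positions s sel h j = s /\ distances s sel h j = 0.
Proof. exists (S (max_selected sel h)); apply unselected_server_unmoved; lia. Qed.

Fixpoint descending_history (s : R) (N m : nat) : list R :=
  match m with
  | O => []
  | S k => (s + INR N - INR k) :: descending_history s N k
  end.

Lemma descending_positions s sel N m j :
  let p := positions s sel (descending_history s N m) in
  p j = s \/ p j >= s + INR N - INR m + 1.
Proof.
  induction m as [|m IH]; cbv zeta in *; [now left|].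
  simpl descending_history; rewrite positions_cons, S_INR; unfold upd.
  destruct (Nat.eqb j _); [right; lra|].
  destruct IH as [H|H]; [now left | right; lra].
Qed.

Lemma descending_request_far s sel N m j : (m < N)%nat ->
  Rabs (positions s sel (descending_history s N m) j - (s + INR N - INR m)) >= 1.
Proof.
  intros Hm.
  assert (HN : INR m + 1 <= INR N) by (rewrite <- S_INR; apply le_INR; lia).
  destruct (descending_positions s sel N m j) as [H|H]; rewrite ?H; lra_abs.
Qed.

Lemma descending_cost_ge s sel N m : (S m <= N)%nat ->
  snd (run s sel (descending_history s N (S m))) >= INR N + INR m.
Proof.
  induction m as [|m IH]; intros Hm.
  - simpl; unfold positions; simpl; pose proof (pos_INR N); lra_abs.
  - change (descending_history s N (S (S m)))
      with ((s + INR N - INR (S m)) :: descending_history s N (S m)).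
    rewrite run_cost_cons; pose proof (S_INR m).
    pose proof (descending_request_far s sel N (S m)
                  (sel (s + INR N - INR (S m) :: descending_history s N (S m)))
                  ltac:(lia)).
    pose proof (IH ltac:(lia)); lra.
Qed.

Definition single_server (h : list R) : nat := O.

Lemma single_server_descending s N m :
  snd (run s single_server (descending_history s N (S m))) = INR N + INR m /\
  positions s single_server (descending_history s N (S m)) O = s + INR N - INR m.
Proof.
  induction m as [|m [Hc Hp]].
  - unfold positions, single_server; simpl; unfold upd; simpl; pose proof (pos_INR N).
    split; lra_abs.
  - change (descending_history s N (S (S m)))
      with ((s + INR N - INR (S m)) :: descending_history s N (S m)).
    rewrite run_cost_cons, positions_cons; change (single_server (_ :: _)) with O.
    rewrite Hc, Hp, S_INR; unfold upd; rewrite Nat.eqb_refl.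
    split; lra_abs.
Qed.

Lemma descending_opt s N : (1 <= N)%nat ->
  is_opt s (rev (descending_history s N N)) (2 * INR N - 1).
Proof.
  intros HN; destruct N as [|K]; [lia|].
  replace (2 * INR (S K) - 1) with (INR (S K) + INR K) by (rewrite S_INR; lra).
  split.
  - exists single_server; rewrite cost_rev; apply single_server_descending.
  - intros sel; rewrite cost_rev.
    pose proof (descending_cost_ge s sel (S K) K (le_n _)); lra.
Qed.

Lemma balance_serves_from_source s sel N m : is_balance s sel -> (S m <= N)%nat ->
  let h := descending_history s N m in
  positions s sel h (sel ((s + INR N - INR m) :: h)) = s.
Proof.
  intros Hb Hm h.
  set (r := s + INR N - INR m); set (i := sel (r :: h)).
  assert (HN : INR m + 1 <= INR N) by (rewrite <- S_INR; apply le_INR; lia).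
  destruct (exists_unmoved_server s sel h) as [j [Hpj Hdj]].
  pose proof (Hb r h j) as Hbal; cbv zeta in Hbal; fold i in Hbal.
  rewrite Hpj, Hdj in Hbal.
  pose proof (distances_ge_displacement s sel h i) as Hdi.
  (* A moved server has D_i >= p_i - s, and p_i >= r + 1, so D_i + |p_i - r| > r - s. *)
  destruct (descending_positions s sel N m i) as [Hsrc|Hfar]; [exact Hsrc|].
  exfalso; fold h in Hfar; unfold r in Hbal; lra_abs.
Qed.

Lemma balance_descending_cost s sel N m : is_balance s sel -> (m <= N)%nat ->
  snd (run s sel (descending_history s N m)) = INR m * (2 * INR N - INR m + 1) / 2.
Proof.
  intros Hb; induction m as [|m IH]; intros Hm; [simpl; lra|].
  simpl descending_history; rewrite run_cost_cons, IH by lia.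
  rewrite (balance_serves_from_source s sel N m Hb Hm), S_INR.
  assert (HN : INR m + 1 <= INR N) by (rewrite <- S_INR; apply le_INR; lia).
  replace (Rabs (s - (s + INR N - INR m))) with (INR N - INR m) by lra_abs.
  field.
Qed.

Lemma quadratic_exceeds_linear (rho c : R) :
  exists N : nat, (1 <= N)%nat /\ rho * (2 * INR N - 1) + c < INR N * (INR N + 1) / 2.
Proof.
  destruct (INR_unbounded (4 * Rabs rho + 2 * Rabs c + 1)) as [K HK].
  exists (S K); split; [lia|]; rewrite S_INR.
  pose proof (Rle_abs rho); pose proof (Rabs_pos rho); pose proof (pos_INR K).
  pose proof (Rle_abs c); pose proof (Rabs_pos c).
  assert (rho * (2 * (INR K + 1) - 1) <= INR K / 4 * (2 * (INR K + 1) - 1))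
    by (apply Rmult_le_compat_r; lra).
  nra.
Qed.

Theorem proposition4 :
  forall (s : R) (alg : list R -> nat), is_balance s alg -> ~ competitive s alg.
Proof.
  intros s alg Hb [rho [c Hc]].
  destruct (quadratic_exceeds_linear rho c) as [N [HN Hlt]].
  specialize (Hc _ _ (descending_opt s N HN)).
  rewrite cost_rev, (balance_descending_cost s alg N N Hb (le_n N)) in Hc.
  lra.
Qed.
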